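(* Let $\mathcal{S}\subset\mathbb{R}^n$ be compact convex with $\|x\|\le D$ for all $x\in\mathcal{S}$ ($D\ge1$), let $f_1,\dots,f_T:\mathcal{S}\to\mathbb{R}$ be differentiable and $\ell$-strongly convex with $\|\nabla f_t(x)\|\le G$ on $\mathcal{S}$, and let $V\ge0$. Let $\theta_1\in\mathcal{S}$ and $\theta_{t+1}=\operatorname{argmin}_{\theta\in\mathcal{S}}\|\theta-(\theta_t-\eta_t\nabla f_t(\theta_t))\|^2$ with $\eta_t=\frac{1-\gamma}{\ell(1-\gamma^t)}$ and $$\gamma=1-\frac12\sqrt{\frac{\max\{V,\log^2T/T\}}{2DT}}.$$ Then for all $z_1,\dots,z_T\in\mathcal{S}$ with $\sum_{t=2}^T\|z_t-z_{t-1}\|\le V$, $$\sum_{t=1}^T\big(f_t(\theta_t)-f_t(z_t)\big)\le\max\{O(\log T),O(\sqrt{TV})\}.$$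
   Context: $\ell$-strongly convex: $f(y)\ge f(x)+\nabla f(x)^\top(y-x)+\frac\ell2\|x-y\|^2$. $O(\cdot)$ hides constants depending only on $\ell,G,D$. *)

From HB Require Import structures.
From mathcomp Require Import all_boot all_order all_algebra.
From mathcomp Require Import all_classical all_reals all_analysis.
Set Implicit Arguments. Unset Strict Implicit. Unset Printing Implicit Defensive.
Import Order.TTheory GRing.Theory Num.Theory.
Import numFieldNormedType.Exports.
Local Open Scope classical_set_scope.
Local Open Scope ring_scope.

Definition dotv (R : realType) (n : nat) (u v : 'rV[R]_n) : R :=
  \sum_(i < n) u ord0 i * v ord0 i.
Definition enorm (R : realType) (n : nat) (v : 'rV[R]_n) : R :=
  Num.sqrt (dotv v v).

Definition grad (R : realType) (n : nat) (f : 'rV[R]_n -> R) (x : 'rV[R]_n)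
  : 'rV[R]_n := \row_(i < n) ('d f x (delta_mx ord0 i : 'rV[R]_n)).

Definition strongly_convex_on (R : realType) (n : nat) (l : R)
  (S : set 'rV[R]_n) (f : 'rV[R]_n -> R) : Prop :=
  forall x y, S x -> S y ->
    f y >= f x + dotv (grad f x) (y - x) + l / 2 * enorm (x - y) ^+ 2.

Definition is_proj (R : realType) (n : nat) (S : set 'rV[R]_n)
  (w p : 'rV[R]_n) : Prop :=
  S p /\ forall y, S y -> enorm (p - w) ^+ 2 <= enorm (y - w) ^+ 2.

(* Online projected gradient descent whose inverse step sizes grow by at most [l] per
   round has, against any comparator sequence [z] with path length [P],
   dynamic regret at most [2 D max_t (1/eta_t) P + G^2/2 sum_t eta_t]: in each round,
   strong convexity and the obtuse-angle property of the projection bound the regret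
   by the difference of the potentials [(1/eta_t - l)/2 |theta_t - z_t|^2], a drift
   term [2 D / eta_t |z_(t+1) - z_t|] and [G^2 eta_t / 2].  The discounted step sizes
   satisfy [1/eta_t = l sum_(k<t) gamma^k <= l/(1 - gamma)] and
   [eta_t <= (1/t + 1 - gamma)/l], so the regret is at most
   [2 D l V/(1 - gamma) + G^2 (1 + ln T + T (1 - gamma))/(2 l)], and the choice of
   [1 - gamma ~ sqrt (max (V, ln^2 T / T) / T)] balances both terms at
   [O(max (ln T, sqrt (T V)))].  When [V > T] the prescribed [gamma] may be negative,
   but then the per-round bound [G^2 / (2 l)] summed over [T <= sqrt (T V)] rounds
   suffices. *)

From HB Require Import structures.
From mathcomp Require Import all_boot all_order all_algebra.
From mathcomp Require Import all_classical all_reals all_analysis.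
From mathcomp Require Import ring lra.
Set Implicit Arguments. Unset Strict Implicit. Unset Printing Implicit Defensive.
Import Order.TTheory GRing.Theory Num.Theory.
Import numFieldNormedType.Exports.
Local Open Scope classical_set_scope.
Local Open Scope ring_scope.

Section EuclideanGeometry.
Variables (R : realType) (n : nat).
Implicit Types (u v w x y p : 'rV[R]_n) (c : R).

Lemma dotvC u v : dotv u v = dotv v u.
Proof. by apply: eq_bigr => i _; rewrite mulrC. Qed.

Lemma dotv0l v : dotv 0 v = 0.
Proof. by rewrite /dotv big1 // => i _; rewrite mxE mul0r. Qed.

Lemma dotvDl u v w : dotv (u + v) w = dotv u w + dotv v w.
Proof. by rewrite /dotv -big_split; apply: eq_bigr => i _; rewrite mxE mulrDl. Qed.

Lemma dotvBl u v w : dotv (u - v) w = dotv u w - dotv v w.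
Proof. by rewrite /dotv -sumrB; apply: eq_bigr => i _; rewrite !mxE mulrBl. Qed.

Lemma dotvZl c u v : dotv (c *: u) v = c * dotv u v.
Proof. by rewrite /dotv mulr_sumr; apply: eq_bigr => i _; rewrite mxE mulrA. Qed.

Lemma dotvNl u v : dotv (- u) v = - dotv u v.
Proof. by rewrite -scaleN1r dotvZl mulN1r. Qed.

Lemma dotvNr u v : dotv u (- v) = - dotv u v.
Proof. by rewrite dotvC dotvNl dotvC. Qed.

Lemma dotvDr u v w : dotv u (v + w) = dotv u v + dotv u w.
Proof. by rewrite dotvC dotvDl !(dotvC u). Qed.

Lemma dotvBr u v w : dotv u (v - w) = dotv u v - dotv u w.
Proof. by rewrite dotvC dotvBl !(dotvC u). Qed.

Lemma dotvZr c u v : dotv u (c *: v) = c * dotv u v.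
Proof. by rewrite dotvC dotvZl dotvC. Qed.

Lemma dotvv_ge0 u : 0 <= dotv u u.
Proof. by apply: sumr_ge0 => i _; rewrite -expr2 sqr_ge0. Qed.

Lemma dotvv_eq0 u : (dotv u u == 0) = (u == 0).
Proof.
apply/idP/eqP => [/eqP u0|->]; last by rewrite dotv0l.
apply/rowP => i; rewrite mxE; apply/eqP.
by rewrite -sqrf_eq0 expr2 (psumr_eq0P _ u0) // => j _; rewrite -expr2 sqr_ge0.
Qed.

Lemma enorm_ge0 u : 0 <= enorm u.
Proof. exact: sqrtr_ge0. Qed.

Lemma sqr_enorm u : enorm u ^+ 2 = dotv u u.
Proof. by rewrite sqr_sqrtr // dotvv_ge0. Qed.

Lemma sqr_enormD u v :
  enorm (u + v) ^+ 2 = enorm u ^+ 2 + 2 * dotv u v + enorm v ^+ 2.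
Proof. by rewrite !sqr_enorm !dotvDl !dotvDr (dotvC v u); ring. Qed.

Lemma sqr_enormB u v :
  enorm (u - v) ^+ 2 = enorm u ^+ 2 - 2 * dotv u v + enorm v ^+ 2.
Proof. by rewrite !sqr_enorm !dotvBl !dotvBr (dotvC v u); ring. Qed.

Lemma sqr_enormZ c u : enorm (c *: u) ^+ 2 = c ^+ 2 * enorm u ^+ 2.
Proof. by rewrite !sqr_enorm dotvZl dotvZr mulrA -expr2. Qed.

Lemma sqr_enorm_le u c : enorm u <= c -> enorm u ^+ 2 <= c ^+ 2.
Proof. by move=> uc; rewrite ler_sqr ?nnegrE ?enorm_ge0 // (le_trans (enorm_ge0 u)). Qed.

Lemma dotv_le_enorm u v : dotv u v <= enorm u * enorm v.
Proof.
have [->|u0] := eqVneq u 0; first by rewrite dotv0l mulr_ge0 ?enorm_ge0.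
have [->|v0] := eqVneq v 0; first by rewrite dotvC dotv0l mulr_ge0 ?enorm_ge0.
have enorm_gt0 w : w != 0 -> 0 < enorm w.
  by move=> w0; rewrite sqrtr_gt0 lt_def dotvv_eq0 w0 dotvv_ge0.
set a := enorm u; set b := enorm v.
have ab_gt0 : 0 < a * b by rewrite mulr_gt0 ?enorm_gt0.
(* [|b u - a v|^2 = 2 a b (a b - <u, v>)] *)
have := sqr_ge0 (enorm (b *: u - a *: v)).
rewrite sqr_enormB !sqr_enormZ dotvZl dotvZr -/a -/b; nra.
Qed.

Lemma enormN u : enorm (- u) = enorm u.
Proof. by rewrite /enorm dotvNl dotvNr opprK. Qed.

Lemma ler_enormD u v : enorm (u + v) <= enorm u + enorm v.
Proof.
rewrite -ler_sqr ?nnegrE ?addr_ge0 ?enorm_ge0 // sqr_enormD.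
by have := dotv_le_enorm u v; lra.
Qed.

Lemma ler_enormB u v : enorm (u - v) <= enorm u + enorm v.
Proof. by rewrite -(enormN v) ler_enormD. Qed.

Lemma sqr_enormB_drift c x y y' :
    enorm x <= c -> enorm y <= c -> enorm y' <= c ->
  enorm (x - y') ^+ 2 <= enorm (x - y) ^+ 2 + 4 * c * enorm (y' - y).
Proof.
move=> xc yc y'c.
(* [|x - y'|^2 - |x - y|^2] factors as a difference, bounded by [|y' - y|], times a sum,
   bounded by [4 c] *)
have tri : enorm (x - y') <= enorm (x - y) + enorm (y' - y).
  by have := ler_enormB (x - y) (y' - y); rewrite opprB addrA subrK.
have := ler_enormB x y; have := ler_enormB x y'.
have := enorm_ge0 (x - y); have := enorm_ge0 (x - y'); have := enorm_ge0 (y' - y).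
nra.
Qed.

Lemma dotv_le_descent u v g c : 0 < c ->
    enorm v ^+ 2 <= enorm (u - c *: g) ^+ 2 ->
  dotv g u <= c^-1 / 2 * (enorm u ^+ 2 - enorm v ^+ 2) + c / 2 * enorm g ^+ 2.
Proof.
move=> c_gt0; rewrite sqr_enormB sqr_enormZ dotvZr (dotvC u) => h.
rewrite -subr_ge0.
have -> : c^-1 / 2 * (enorm u ^+ 2 - enorm v ^+ 2) + c / 2 * enorm g ^+ 2 - dotv g u
    = c^-1 / 2 * (enorm u ^+ 2 - 2 * (c * dotv g u) + c ^+ 2 * enorm g ^+ 2
                  - enorm v ^+ 2).
  by field; rewrite gt_eqF.
by rewrite mulr_ge0 ?subr_ge0 // divr_ge0 // invr_ge0 ltW.
Qed.

Lemma dotv_le_young u g c : 0 < c ->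
  dotv g u <= c^-1 / 2 * enorm u ^+ 2 + c / 2 * enorm g ^+ 2.
Proof.
move=> c_gt0; have := @dotv_le_descent u 0 g c c_gt0.
by rewrite /enorm dotv0l sqrtr0 expr0n subr0; apply; rewrite sqr_ge0.
Qed.

Lemma in_convex_set (S : set 'rV[R]_n) x y c : convex_set S ->
  S x -> S y -> 0 <= c -> c <= 1 -> S (c *: x + (1 - c) *: y).
Proof.
move=> S_convex Sx Sy c_ge0 c_le1.
have c_itv : Itv.spec (@Itv.num_sem R) (Itv.Real `[0%Z, 1%Z]) c.
  by rewrite /Itv.spec /Itv.num_sem /= in_itv /= c_ge0 c_le1 num_real.
by have := S_convex x y (Itv.mk c_itv); rewrite !inE; apply.
Qed.

Lemma is_proj_obtuse (S : set 'rV[R]_n) w p y : convex_set S ->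
  is_proj S w p -> S y -> 0 <= dotv (p - w) (y - p).
Proof.
move=> S_convex [Sp p_min] Sy.
set b := dotv (p - w) (y - p); set c := enorm (y - p) ^+ 2.
have c_ge0 : 0 <= c by rewrite sqr_ge0.
have segment s : 0 < s -> s <= 1 -> 0 <= 2 * b + s * c.
  move=> s_gt0 s_le1.
  have := p_min _ (in_convex_set S_convex Sy Sp (ltW s_gt0) s_le1).
  have -> : s *: y + (1 - s) *: p - w = (p - w) + s *: (y - p).
    by apply/rowP => i; rewrite !mxE; ring.
  rewrite (sqr_enormD (p - w)) dotvZr sqr_enormZ -/b -/c => h.
  by rewrite -(pmulr_rge0 _ s_gt0); nra.
rewrite leNgt; apply/negP => b_lt0.
(* at [s = -b / (c - b)] the segment condition reads [b (1 + s) >= 0] *)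
have cb_gt0 : 0 < c - b by lra.
have s_gt0 : 0 < - b / (c - b) by rewrite divr_gt0 // oppr_gt0.
have s_le1 : - b / (c - b) <= 1 by rewrite ler_pdivrMr //; lra.
have := segment _ s_gt0 s_le1.
have -> : 2 * b + - b / (c - b) * c = b * (1 + - b / (c - b)).
  by field; rewrite gt_eqF.
by nra.
Qed.

Lemma is_proj_le (S : set 'rV[R]_n) w p y : convex_set S ->
  is_proj S w p -> S y -> enorm (p - y) ^+ 2 <= enorm (w - y) ^+ 2.
Proof.
move=> S_convex wp Sy.
have -> : w - y = (p - y) + (w - p) by rewrite [RHS]addrC addrA subrK.
rewrite (sqr_enormD (p - y)).
have -> : dotv (p - y) (w - p) = dotv (p - w) (y - p).
  by rewrite -(opprB y p) -(opprB p w) dotvNl dotvNr opprK dotvC.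
have := is_proj_obtuse S_convex wp Sy; have := sqr_ge0 (enorm (w - p)); lra.
Qed.

End EuclideanGeometry.

Section RealFacts.
Variable R : realType.

Lemma expr_mul1Dn_le1 (g : R) t : 0 <= g -> g <= 1 ->
  g ^+ t * (1 + (1 - g) * t%:R) <= 1.
Proof.
move=> g_ge0 g_le1; set x := (1 - g) * t%:R.
have x_ge0 : 0 <= x by rewrite mulr_ge0 ?subr_ge0.
have gt_le : g ^+ t <= expR (- x).
  rewrite /x -mulNr expRM_natr lerXn2r ?nnegrE ?expR_ge0 //.
  by have := expR_ge1Dx (- (1 - g)); rewrite opprB addrC subrK.
apply: le_trans (_ : expR (- x) * expR x <= 1).
  by apply: ler_pM gt_le (expR_ge1Dx x); rewrite ?exprn_ge0 ?addr_ge0.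
by rewrite expRN mulVf // gt_eqF ?expR_gt0.
Qed.

Lemma invSn_le_lnB t : (0 < t)%N -> (t.+1%:R : R)^-1 <= ln t.+1%:R - ln t%:R.
Proof.
move=> t_gt0; have t1_gt0 : (0 : R) < t.+1%:R by rewrite ltr0n.
have := @le_ln1Dx R (- (t.+1%:R)^-1).
rewrite ltrN2 invf_lt1 // ltr1n ltnS t_gt0 => /(_ isT).
have -> : 1 - (t.+1%:R : R)^-1 = t%:R / t.+1%:R.
  by rewrite -natr1; field; rewrite -natr1 in t1_gt0; rewrite gt_eqF.
by rewrite ln_div ?posrE ?ltr0n // -lerN2 opprB opprK.
Qed.

Lemma harmonic_sum_le T : (0 < T)%N ->
  \sum_(1 <= t < T.+1) (t%:R : R)^-1 <= 1 + ln T%:R.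
Proof.
case: T => // T _; rewrite big_nat_recl // invr1 lerD2l.
have -> : ln T.+1%:R = \sum_(1 <= t < T.+1) (ln t.+1%:R - ln t%:R :> R).
  by rewrite telescope_sumr // ln1 subr0.
by apply: ler_sum_nat => t /andP[t_gt0 _]; apply: invSn_le_lnB.
Qed.

Lemma ln_nat_ge_half T : (2 <= T)%N -> 2^-1 <= ln (T%:R : R).
Proof.
move=> T_ge2; have := @le_ln1Dx R (- 2^-1).
rewrite ltrN2 invf_lt1 ?ltr1n // => /(_ isT).
have -> : 1 - 2^-1 = (2^-1 : R) by field.
rewrite lnV ?posrE // => ln2_ge.
have : ln (2 : R) <= ln T%:R by rewrite ler_ln ?posrE ?ltr0n ?ler_nat // (leq_trans _ T_ge2).
lra.
Qed.

Lemma ler_sqrtr_mul (x y : R) : 0 <= x -> x <= y -> x <= Num.sqrt (x * y).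
Proof.
move=> x_ge0 x_le_y; rewrite -[X in X <= _](ger0_norm x_ge0) -sqrtr_sqr.
by rewrite ler_wsqrtr // expr2 ler_wpM2l.
Qed.

End RealFacts.

Definition discounted_step (R : realType) (l gamma : R) (t : nat) : R :=
  (1 - gamma) / (l * (1 - gamma ^+ t)).

Section DiscountedStepSize.
Variables (R : realType) (l gamma : R).
Hypotheses (l_gt0 : 0 < l) (gamma_ge0 : 0 <= gamma) (gamma_lt1 : gamma < 1).

Let eta := discounted_step l gamma.
Let count t := \sum_(k < t) gamma ^+ k.

Let count_mul1B t : (1 - gamma) * count t = 1 - gamma ^+ t.
Proof. by apply: oppr_inj; rewrite -mulNr !opprB subrX1. Qed.

Let count_ge1 t : (0 < t)%N -> 1 <= count t.
Proof.
case: t => // t _; rewrite /count big_ord_recl expr0 lerDl.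
by apply: sumr_ge0 => k _; rewrite exprn_ge0.
Qed.

Let count_S t : count t.+1 = 1 + gamma * count t.
Proof.
rewrite /count big_ord_recl expr0 mulr_sumr; congr (_ + _).
by apply: eq_bigr => k _; rewrite exprS.
Qed.

Lemma discounted_step_invE t : (0 < t)%N -> (eta t)^-1 = l * count t.
Proof.
move=> t_gt0; rewrite /eta /discounted_step -count_mul1B invf_div.
by field; rewrite gt_eqF ?subr_gt0 //; have := count_ge1 t_gt0; lra.
Qed.

Lemma discounted_step_gt0 t : (0 < t)%N -> 0 < eta t.
Proof.
move=> t_gt0; rewrite -invr_gt0 discounted_step_invE //.
by rewrite mulr_gt0 // (lt_le_trans ltr01 (count_ge1 _)).
Qed.

Lemma discounted_step_inv1 : (eta 1)^-1 = l.
Proof. by rewrite discounted_step_invE // /count big_ord1 expr0 mulr1. Qed.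

Lemma discounted_step_invS t : (0 < t)%N -> (eta t.+1)^-1 <= (eta t)^-1 + l.
Proof.
move=> t_gt0; rewrite !discounted_step_invE // count_S.
have : gamma * count t <= count t.
  by rewrite ler_piMl ?(ltW gamma_lt1) // (le_trans ler01 (count_ge1 _)).
by move/(ler_wpM2l (ltW l_gt0)); lra.
Qed.

Lemma discounted_step_inv_le t : (0 < t)%N -> (eta t)^-1 <= l / (1 - gamma).
Proof.
move=> t_gt0; rewrite discounted_step_invE // ler_pdivlMr ?subr_gt0 // -mulrA.
by rewrite [_ * (1 - gamma)]mulrC count_mul1B ler_piMr ?(ltW l_gt0) // gerBl exprn_ge0.
Qed.

Lemma discounted_step_le t : (0 < t)%N -> eta t <= (t%:R^-1 + (1 - gamma)) / l.
Proof.
move=> t_gt0; have t_pos : (0 : R) < t%:R by rewrite ltr0n.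
(* [gamma^t (1 + (1 - gamma) t) <= 1] yields [t <= (1 + (1 - gamma) t) count t] *)
have count_ge : t%:R <= (1 + (1 - gamma) * t%:R) * count t.
  have := expr_mul1Dn_le1 t gamma_ge0 (ltW gamma_lt1).
  have := count_mul1B t; have := subr_gt0 gamma 1; rewrite gamma_lt1.
  have := count_ge1 t_gt0; nra.
have count_gt0 : 0 < count t := lt_le_trans ltr01 (count_ge1 t_gt0).
rewrite -[eta t]invrK discounted_step_invE // -subr_ge0.
have -> : (t%:R^-1 + (1 - gamma)) / l - (l * count t)^-1
    = ((1 + (1 - gamma) * t%:R) * count t - t%:R) / (t%:R * l * count t).
  by field; rewrite !gt_eqF.
by rewrite divr_ge0 ?subr_ge0 // ltW // !mulr_gt0.
Qed.

Lemma sum_discounted_step_le T : (0 < T)%N ->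
  \sum_(1 <= t < T.+1) eta t <= (1 + ln T%:R + T%:R * (1 - gamma)) / l.
Proof.
move=> T_gt0.
apply: le_trans (ler_sum_nat (fun t Ht => discounted_step_le (proj1 (andP Ht)))) _.
rewrite -mulr_suml big_split /= sumr_const_nat subn1 /= ler_pM2r ?invr_gt0 //.
by rewrite mulr_natl lerD2r harmonic_sum_le.
Qed.
End DiscountedStepSize.

Lemma strongly_convex_gap_le (R : realType) (n : nat) (l : R) (S : set 'rV[R]_n) f x y :
  strongly_convex_on l S f -> S x -> S y ->
  f x - f y <= dotv (grad f x) (x - y) - l / 2 * enorm (x - y) ^+ 2.
Proof.
move=> f_sc Sx Sy; have := f_sc _ _ Sx Sy.
by rewrite -(opprB x y) dotvNr; lra.
Qed.

Lemma strongly_convex_gap_le_grad (R : realType) (n : nat) (l G : R)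
    (S : set 'rV[R]_n) f x y : 0 < l ->
  strongly_convex_on l S f -> S x -> S y -> enorm (grad f x) <= G ->
  f x - f y <= G ^+ 2 / (2 * l).
Proof.
move=> l_gt0 f_sc Sx Sy grad_le.
have gap := strongly_convex_gap_le f_sc Sx Sy.
have li_gt0 : 0 < l^-1 by rewrite invr_gt0.
have := dotv_le_young (x - y) (grad f x) li_gt0; rewrite invrK.
have := ler_wpM2l (ltW li_gt0) (sqr_enorm_le grad_le).
have -> : G ^+ 2 / (2 * l) = l^-1 / 2 * G ^+ 2 by field; rewrite gt_eqF.
by move: gap; lra.
Qed.

Lemma is_proj_iterates_in (R : realType) (n : nat) (S : set 'rV[R]_n) (T : nat)
    (w theta : nat -> 'rV[R]_n) :
  S (theta 1%N) -> (forall t, (1 <= t < T)%N -> is_proj S (w t) (theta t.+1)) ->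
  forall t, (1 <= t <= T)%N -> S (theta t).
Proof.
move=> S1 proj; elim=> [//|[//|t] IH] /andP[_ tT].
by have [] := proj t.+1 tT.
Qed.

Lemma regret_le_horizon (R : realType) (n : nat) (S : set 'rV[R]_n) (T : nat)
    (f : nat -> 'rV[R]_n -> R) (theta z : nat -> 'rV[R]_n) (l G : R) : 0 < l ->
  (forall t, (1 <= t <= T)%N -> strongly_convex_on l S (f t)) ->
  (forall t, (1 <= t <= T)%N -> forall x, S x -> enorm (grad (f t) x) <= G) ->
  (forall t, (1 <= t <= T)%N -> S (theta t)) ->
  (forall t, (1 <= t <= T)%N -> S (z t)) ->
  \sum_(1 <= t < T.+1) (f t (theta t) - f t (z t)) <= T%:R * (G ^+ 2 / (2 * l)).
Proof.
move=> l_gt0 f_sc grad_le theta_in z_in.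
have step t : (1 <= t < T.+1)%N -> f t (theta t) - f t (z t) <= G ^+ 2 / (2 * l).
  rewrite ltnS => Ht; apply: strongly_convex_gap_le_grad l_gt0 (f_sc t Ht)
    (theta_in t Ht) (z_in t Ht) (grad_le t Ht _ (theta_in t Ht)).
by apply: le_trans (ler_sum_nat step) _; rewrite sumr_const_nat subn1 /= -[_ *+ T]mulr_natl.
Qed.

Section OnlineGradientDescent.
Variables (R : realType) (n : nat) (S : set 'rV[R]_n) (T : nat).
Variables (f : nat -> 'rV[R]_n -> R) (theta z : nat -> 'rV[R]_n) (eta : nat -> R).
Variables (l G D K : R).
Hypotheses (S_convex : convex_set S) (S_bounded : forall x, S x -> enorm x <= D).
Hypotheses (T_gt0 : (0 < T)%N).
Hypothesis f_sc : forall t, (1 <= t <= T)%N -> strongly_convex_on l S (f t).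
Hypothesis grad_le :
  forall t, (1 <= t <= T)%N -> forall x, S x -> enorm (grad (f t) x) <= G.
Hypothesis theta_in : forall t, (1 <= t <= T)%N -> S (theta t).
Hypothesis theta_proj : forall t, (1 <= t < T)%N ->
  is_proj S (theta t - eta t *: grad (f t) (theta t)) (theta t.+1).
Hypothesis z_in : forall t, (1 <= t <= T)%N -> S (z t).
Hypothesis eta_gt0 : forall t, (1 <= t <= T)%N -> 0 < eta t.
Hypothesis eta_inv1 : (eta 1%N)^-1 <= l.
Hypothesis eta_invS : forall t, (1 <= t < T)%N -> (eta t.+1)^-1 <= (eta t)^-1 + l.
Hypothesis eta_inv_le : forall t, (1 <= t < T)%N -> (eta t)^-1 <= K.

Let g t := grad (f t) (theta t).
Let Phi t := ((eta t)^-1 - l) / 2 * enorm (theta t - z t) ^+ 2.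

Lemma ogd_regret_step t : (1 <= t < T)%N ->
  f t (theta t) - f t (z t) <=
    Phi t - Phi t.+1 + 2 * D * K * enorm (z t.+1 - z t) + G ^+ 2 / 2 * eta t.
Proof.
move=> /[dup] Ht' /andP[t_ge1 t_ltT].
have Ht : (1 <= t <= T)%N by rewrite t_ge1 ltnW.
have Ht1 : (1 <= t.+1 <= T)%N by rewrite t_ltT.
set e := eta t; set d := enorm (theta t - z t) ^+ 2.
set d' := enorm (theta t.+1 - z t) ^+ 2; set d1 := enorm (theta t.+1 - z t.+1) ^+ 2.
set m := enorm (z t.+1 - z t).
have gap := strongly_convex_gap_le (f_sc Ht) (theta_in Ht) (z_in Ht).
have descent :
    dotv (g t) (theta t - z t) <= e^-1 / 2 * (d - d') + e / 2 * enorm (g t) ^+ 2.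
  apply: dotv_le_descent (eta_gt0 Ht) _.
  have -> : theta t - z t - e *: g t = theta t - e *: g t - z t.
    by rewrite addrAC.
  exact: is_proj_le S_convex (theta_proj Ht') (z_in Ht).
have drift : d1 <= d' + 4 * D * m.
  exact: sqr_enormB_drift (S_bounded (theta_in Ht1)) (S_bounded (z_in Ht))
    (S_bounded (z_in Ht1)).
have D_ge0 : 0 <= D := le_trans (enorm_ge0 _) (S_bounded (z_in Ht)).
have w_ge0 : 0 <= e^-1 by rewrite invr_ge0 ltW ?eta_gt0.
have Dm_ge0 : 0 <= D * m by rewrite mulr_ge0 ?enorm_ge0.
have h1 := ler_wpM2l w_ge0 drift.
have h2 : ((eta t.+1)^-1 - l) * d1 <= e^-1 * d1.
  by rewrite ler_wpM2r ?sqr_ge0 // lerBlDr eta_invS.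
have h3 := ler_wpM2r Dm_ge0 (eta_inv_le Ht').
have h4 := ler_wpM2l (ltW (eta_gt0 Ht)) (sqr_enorm_le (grad_le Ht (theta_in Ht))).
move: gap descent h1 h2 h3 h4; rewrite /Phi -/(g t) -/e -/d -/d1; lra.
Qed.

Lemma ogd_regret_last : f T (theta T) - f T (z T) <= Phi T + G ^+ 2 / 2 * eta T.
Proof.
have HT : (1 <= T <= T)%N by rewrite T_gt0 leqnn.
have gap := strongly_convex_gap_le (f_sc HT) (theta_in HT) (z_in HT).
have young := dotv_le_young (theta T - z T) (g T) (eta_gt0 HT).
have := ler_wpM2l (ltW (eta_gt0 HT)) (sqr_enorm_le (grad_le HT (theta_in HT))).
by rewrite /Phi; move: gap young; rewrite -/(g T); lra.
Qed.

Theorem ogd_dynamic_regret_le :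
  \sum_(1 <= t < T.+1) (f t (theta t) - f t (z t)) <=
  2 * D * K * \sum_(1 <= t < T) enorm (z t.+1 - z t)
  + G ^+ 2 / 2 * \sum_(1 <= t < T.+1) eta t.
Proof.
have telescope : \sum_(1 <= t < T) (Phi t - Phi t.+1) = Phi 1%N - Phi T.
  rewrite (telescope_sumr_eq (fun k => - Phi k)) // => [|k _]; last by rewrite opprK addrC.
  by rewrite opprK addrC.
have steps := ler_sum_nat ogd_regret_step.
rewrite [X in _ <= X]big_split [X in _ <= X + _]big_split /= telescope -!mulr_sumr in steps.
have Phi1_le0 : Phi 1%N <= 0.
  by rewrite /Phi mulr_le0_ge0 ?sqr_ge0 // pmulr_lle0 ?subr_le0.
rewrite !big_nat_recr //=; have := ogd_regret_last; lra.
Qed.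

End OnlineGradientDescent.

Lemma discounted_ogd_regret_le (R : realType) (n : nat) (S : set 'rV[R]_n) (T : nat)
    (f : nat -> 'rV[R]_n -> R) (theta z : nat -> 'rV[R]_n) (l G D gamma V : R) :
  convex_set S -> (forall x, S x -> enorm x <= D) -> (0 < T)%N -> 0 < l ->
  0 <= gamma -> gamma < 1 ->
  (forall t, (1 <= t <= T)%N -> strongly_convex_on l S (f t)) ->
  (forall t, (1 <= t <= T)%N -> forall x, S x -> enorm (grad (f t) x) <= G) ->
  (forall t, (1 <= t <= T)%N -> S (theta t)) ->
  (forall t, (1 <= t < T)%N -> is_proj S
    (theta t - discounted_step l gamma t *: grad (f t) (theta t)) (theta t.+1)) ->
  (forall t, (1 <= t <= T)%N -> S (z t)) ->
  \sum_(1 <= t < T) enorm (z t.+1 - z t) <= V ->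
  \sum_(1 <= t < T.+1) (f t (theta t) - f t (z t)) <=
    2 * D * (l / (1 - gamma)) * V
    + G ^+ 2 / 2 * ((1 + ln T%:R + T%:R * (1 - gamma)) / l).
Proof.
move=> S_convex S_bounded T_gt0 l_gt0 gamma_ge0 gamma_lt1 f_sc grad_le theta_in
  theta_proj z_in path_le.
apply: le_trans (ogd_dynamic_regret_le S_convex S_bounded T_gt0 f_sc grad_le
  theta_in theta_proj z_in _ _ _ _) _.
- by move=> t /andP[t_gt0 _]; apply: discounted_step_gt0.
- by rewrite discounted_step_inv1.
- by move=> t /andP[t_gt0 _]; apply: discounted_step_invS.
- by move=> t /andP[t_gt0 _]; apply: discounted_step_inv_le.
have D_ge0 : 0 <= D := le_trans (enorm_ge0 _) (S_bounded _ (z_in 1%N T_gt0)).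
have K_ge0 : 0 <= l / (1 - gamma) by rewrite divr_ge0 ?subr_ge0 ?ltW.
apply: lerD.
  by apply: ler_wpM2l path_le; rewrite mulr_ge0 // mulr_ge0.
by apply: ler_wpM2l (sum_discounted_step_le _ _ _ _); rewrite ?divr_ge0 ?sqr_ge0.
Qed.

Section TunedDiscount.
Variables (R : realType) (D V : R) (T : nat).
Hypotheses (D_ge1 : 1 <= D) (V_ge0 : 0 <= V) (T_ge2 : (2 <= T)%N) (V_leT : V <= T%:R).

Let M := Num.max V (ln T%:R ^+ 2 / T%:R).
Let alpha := 2^-1 * Num.sqrt (M / (2 * D * T%:R)).
Let bound := Num.max (ln T%:R) (Num.sqrt (T%:R * V)).

Let D_gt0 : 0 < D. Proof. exact: lt_le_trans ltr01 D_ge1. Qed.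
Let T_gt1 : (1 : R) < T%:R. Proof. by rewrite ltr1n. Qed.
Let T_gt0 : (0 : R) < T%:R. Proof. exact: lt_trans ltr01 T_gt1. Qed.
Let lnT_gt0 : 0 < ln (T%:R : R). Proof. exact: ln_gt0. Qed.
Let V_leM : V <= M. Proof. by rewrite le_max lexx. Qed.
Let M_gt0 : 0 < M.
Proof.
apply: lt_le_trans (_ : 0 < ln T%:R ^+ 2 / T%:R) _; first by rewrite divr_gt0 ?exprn_gt0.
by rewrite le_max lexx orbT.
Qed.
Let TV_ge0 : 0 <= T%:R * V. Proof. exact: mulr_ge0 (ltW T_gt0) V_ge0. Qed.
Let ln_le_bound : ln T%:R <= bound. Proof. by rewrite le_max lexx. Qed.
Let sqrt_le_bound : Num.sqrt (T%:R * V) <= bound. Proof. by rewrite le_max lexx orbT. Qed.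

Lemma tuned_alpha_sqr : alpha ^+ 2 = M / (8 * D * T%:R).
Proof.
rewrite exprMn sqr_sqrtr ?divr_ge0 ?mulr_ge0 ?ltW //.
by field; rewrite !gt_eqF.
Qed.

Lemma tuned_alpha_gt0 : 0 < alpha.
Proof. by rewrite mulr_gt0 // sqrtr_gt0 divr_gt0 // !mulr_gt0. Qed.

Let alpha_ge0 : 0 <= alpha. Proof. exact: ltW tuned_alpha_gt0. Qed.

Lemma tuned_alpha_le1 : alpha <= 1.
Proof.
rewrite -ler_sqr ?nnegrE //.
rewrite tuned_alpha_sqr expr1n ler_pdivrMr ?mulr_gt0 // mul1r ge_max; apply/andP; split.
  have D8 : 1 <= 8 * D by have := D_ge1; lra.
  by apply: le_trans V_leT _; rewrite ler_peMl // ltW.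
rewrite ler_pdivrMr // expr2.
have lnT_le : ln T%:R <= T%:R := ltW (ln_sublinear T_gt0).
apply: le_trans (ler_pM (ltW lnT_gt0) (ltW lnT_gt0) lnT_le lnT_le) _.
by have := D_ge1; have := T_gt0; nra.
Qed.

Lemma tuned_path_le : V / alpha <= 8 * D * Num.sqrt (T%:R * V).
Proof.
have a_gt0 := tuned_alpha_gt0.
rewrite -ler_sqr ?nnegrE ?divr_ge0 ?mulr_ge0 ?sqrtr_ge0 ?(ltW D_gt0) //.
rewrite expr_div_n tuned_alpha_sqr !exprMn sqr_sqrtr //.
have -> : V ^+ 2 / (M / (8 * D * T%:R)) = 8 * D * (T%:R * V) * (V / M).
  by field; rewrite !gt_eqF.
have VM_le1 : V / M <= 1 by rewrite ler_pdivrMr // mul1r.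
apply: le_trans (ler_piMr _ VM_le1) _; first by rewrite !mulr_ge0 ?(ltW D_gt0).
by apply: (ler_wpM2r TV_ge0); have := D_ge1; nra.
Qed.

Lemma tuned_horizon_le : T%:R * alpha <= bound.
Proof.
have bound_ge0 : 0 <= bound := le_trans (ltW lnT_gt0) ln_le_bound.
have TM_le : T%:R * M <= bound ^+ 2.
  rewrite /M maxr_pMr ?(ltW T_gt0) // ge_max; apply/andP; split.
    by rewrite -(sqr_sqrtr TV_ge0) lerXn2r ?nnegrE ?sqrtr_ge0.
  by rewrite mulrC divfK ?gt_eqF // lerXn2r ?nnegrE ?(ltW lnT_gt0).
rewrite -ler_sqr ?nnegrE ?mulr_ge0 ?(ltW T_gt0) // exprMn tuned_alpha_sqr.
have -> : T%:R ^+ 2 * (M / (8 * D * T%:R)) = T%:R * M / (8 * D).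
  by field; rewrite !gt_eqF.
apply: le_trans TM_le; rewrite ler_pdivrMr ?mulr_gt0 //.
by rewrite ler_peMr ?mulr_ge0 ?(ltW T_gt0) ?(ltW M_gt0) //; have := D_ge1; lra.
Qed.

Lemma tuned_regret_le (l G : R) : 0 < l ->
  2 * D * (l / alpha) * V + G ^+ 2 / 2 * ((1 + ln T%:R + T%:R * alpha) / l)
    <= (16 * D ^+ 2 * l + 2 * (G ^+ 2 / l)) * bound.
Proof.
move=> l_gt0; have a_gt0 := tuned_alpha_gt0.
have path_term : 2 * D * (l / alpha) * V <= 16 * D ^+ 2 * l * bound.
  have -> : 2 * D * (l / alpha) * V = 2 * D * l * (V / alpha) by field; rewrite gt_eqF.
  have c_ge0 : 0 <= 2 * D * l by rewrite !mulr_ge0 ?(ltW D_gt0) ?(ltW l_gt0).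
  apply: le_trans (ler_wpM2l c_ge0 tuned_path_le) _.
  have -> : 2 * D * l * (8 * D * Num.sqrt (T%:R * V))
      = 16 * D ^+ 2 * l * Num.sqrt (T%:R * V) by ring.
  by apply: ler_wpM2l sqrt_le_bound; have := sqr_ge0 D; nra.
have sum_term : 1 + ln T%:R + T%:R * alpha <= 4 * bound.
  by have := ln_nat_ge_half R T_ge2; have := tuned_horizon_le; have := ln_le_bound; lra.
have := ler_wpM2l (divr_ge0 (sqr_ge0 G) (ltW l_gt0)) sum_term.
have -> : G ^+ 2 / 2 * ((1 + ln T%:R + T%:R * alpha) / l)
    = G ^+ 2 / l / 2 * (1 + ln T%:R + T%:R * alpha).
  by field; rewrite gt_eqF.
by move: path_term; lra.
Qed.

End TunedDiscount.

Theorem corollary3p3 (R : realType) (l G D : R) :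
  0 < l -> 1 <= D ->
  exists C : R, 0 < C /\
  forall (n : nat) (S : set 'rV[R]_n) (T : nat) (f : nat -> 'rV[R]_n -> R)
         (V : R) (theta z : nat -> 'rV[R]_n),
    compact S -> convex_set S ->
    (forall x, S x -> enorm x <= D) ->
    (2 <= T)%N ->
    (forall t, (1 <= t <= T)%N ->
       (forall x, S x -> differentiable (f t) x) /\
       strongly_convex_on l S (f t) /\
       (forall x, S x -> enorm (grad (f t) x) <= G)) ->
    0 <= V ->
    let gamma : R := 1 - 2^-1 * Num.sqrt
        (Num.max V (ln T%:R ^+ 2 / T%:R) / (2 * D * T%:R)) in
    let eta (t : nat) : R := (1 - gamma) / (l * (1 - gamma ^+ t)) in
    S (theta 1%N) ->
    (forall t, (1 <= t < T)%N ->
       is_proj S (theta t - eta t *: grad (f t) (theta t)) (theta t.+1)) ->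
    (forall t, (1 <= t <= T)%N -> S (z t)) ->
    \sum_(2 <= t < T.+1) enorm (z t - z t.-1) <= V ->
    \sum_(1 <= t < T.+1) (f t (theta t) - f t (z t))
      <= C * Num.max (ln T%:R) (Num.sqrt (T%:R * V)).
Proof.
move=> l_gt0 D_ge1.
have G2l_ge0 : 0 <= G ^+ 2 / l by rewrite divr_ge0 ?sqr_ge0 ?ltW.
have D2l_gt0 : 0 < D ^+ 2 * l by rewrite mulr_gt0 // exprn_gt0 // (lt_le_trans ltr01).
have C_ge : G ^+ 2 / (2 * l) <= 16 * D ^+ 2 * l + 2 * (G ^+ 2 / l).
  have -> : G ^+ 2 / (2 * l) = 2^-1 * (G ^+ 2 / l) by field; rewrite gt_eqF.
  lra.
exists (16 * D ^+ 2 * l + 2 * (G ^+ 2 / l)); split; first lra.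
move=> n S T f V theta z _ S_convex S_bounded T_ge2 f_hyp V_ge0 gamma eta
  theta1 theta_proj z_in path_le.
have f_sc t Ht : strongly_convex_on l S (f t) := (f_hyp t Ht).2.1.
have grad_le t Ht : forall x, S x -> enorm (grad (f t) x) <= G := (f_hyp t Ht).2.2.
have theta_in := is_proj_iterates_in theta1 theta_proj.
have T_gt0 : (0 < T)%N by apply: leq_trans T_ge2.
have [V_leT|T_ltV] := lerP V T%:R; last first.
  apply: le_trans (regret_le_horizon l_gt0 f_sc grad_le theta_in z_in) _.
  rewrite mulrC; apply: (ler_pM _ (ler0n _ T) C_ge).
    by rewrite divr_ge0 ?sqr_ge0 // mulr_ge0 // ltW.
  by rewrite le_max ler_sqrtr_mul ?orbT // ltW.
have a_eq : 1 - gamma = 2^-1 * Num.sqrt (Num.max V (ln T%:R ^+ 2 / T%:R) / (2 * D * T%:R)).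
  exact: subKr.
have gamma_ge0 : 0 <= gamma by rewrite subr_ge0 tuned_alpha_le1.
have gamma_lt1 : gamma < 1 by rewrite gtrBl tuned_alpha_gt0.
rewrite big_add1 /= in path_le.
apply: le_trans (discounted_ogd_regret_le S_convex S_bounded T_gt0 l_gt0 gamma_ge0
  gamma_lt1 f_sc grad_le theta_in theta_proj z_in path_le) _.
by rewrite a_eq tuned_regret_le.
Qed.
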